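(* Let $T$ be a left-linear term rewriting system and $\psi$ a convergent multistep for $T$. Then there exist $\chi$ and $\phi$ such that $\psi\approx_E\chi\cdot\phi$, $\chi$ is a finite stepwise-or-normal proof term all of whose components $\chi[i]$ ($i<|\chi|$) have depth $0$, and $\phi$ is a convergent multistep with $mind(\phi)>0$.
   Context: Setting. $T=(\Sigma,R)$: $\Sigma$ finite; rules $\mu: l\to r$ with $l$ finite, non-variable and linear, variables of $r$ among those of $l$, $r$ possibly infinite. Terms are finite or infinite trees. Multisteps. $\Sigma^R$ is $\Sigma$ plus a symbol $\mu$ of arity $n$ for each rule $\mu: l[x_1,..,x_n]\to r[x_1,..,x_n]$. A multistep is a closed finite or infinite term over $\Sigma^R$; $src(\psi)$ is its normal form under $\mu(x_1,..,x_n)\to l[x_1,..,x_n]$; $tgt(\psi)$ is its normal form, if it exists (via a strongly convergent reduction), under $\mu(x_1,..,x_n)\to r[x_1,..,x_n]$; convergent iff $tgt(\psi)$ is defined; $mind(\psi)=\omega$ if there is no rule symbol, else the least depth of a rule-symbol occurrence. Proof terms are terms over $\Sigma^R\cup\{\cdot/2\}$ built from multisteps by: $\psi_1\cdot\psi_2$ ($\psi_1$ convergent, $tgt(\psi_1)=src(\psi_2)$); infinite concatenation $\prod_{i<\omega}\psi_i=\psi_0\cdot(\psi_1\cdot\cdots)$ (all $\psi_i$ convergent, $tgt(\psi_i)=src(\psi_{i+1})$); $f(\psi_1,..,\psi_m)$, $f\in\Sigma$; $\mu(\psi_1,..,\psi_n)$; with $src$ of concatenations from the first factor, $tgt(\psi_1\cdot\psi_2)=tgt(\psi_2)$,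 $tgt(\prod\psi_i)=\lim tgt(\psi_i)$, componentwise for $f$, and $l[src(\psi_i)]$, $r[tgt(\psi_i)]$ for $\mu$; $mind$ is the minimum for concatenations, $1+\min$ for $f$, $0$ for $\mu$. Base permutation equivalence $\approx_E$: derivable in the equational logic whose axioms are the closed instances (both sides proof terms) of $src(\psi)\cdot\psi=\psi$; $\psi\cdot tgt(\psi)=\psi$ ($\psi$ convergent); associativity of $\cdot$; $f(\vec\psi)\cdot f(\vec\phi)=f(\psi_1\cdot\phi_1,..)$; $\prod_i f(\psi^1_i,..,\psi^m_i)=f(\prod_i\psi^1_i,..)$; $\mu(\vec\psi)=\mu(src(\psi_1),..)\cdot r[\vec\psi]$; $\mu(\vec\psi)=l[\vec\psi]\cdot\mu(tgt(\psi_1),..)$ (all $\psi_i$ convergent); and whose rules are reflexivity, symmetry, transitivity and congruence for all symbols and for binary and infinite concatenation. Stepwise terms. A one-step is a multistep with exactly one rule-symbol occurrence, its depth being the length of that occurrence's position. Stepwise proof terms are one-steps and binary/infinite concatenations of stepwise ones; stepwise-or-normal ones also include rule-free terms. $|\chi|$: $0$ for rule-free, $1$ for one-steps, additive for binary concatenation; finite means $|\chi|<\omega$. Components: $\chi[0]=\chi$ for a one-step; $(\chi_1\cdot\chi_2)[i]=\chi_1[i]$ if $i<|\chi_1|$, else $\chi_2[i-|\chi_1|]$. *)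

From mathcomp Require Import all_boot.

Set Implicit Arguments.
Unset Strict Implicit.
Unset Printing Implicit Defensive.

(* Labels of (possibly infinite) trees: function symbols of Sigma, rule
   symbols of R, the binary concatenation symbol, and variables x_i. *)
Inductive lab (F R : Type) := LF of F | LR of R | LDot | LVar of nat.
Arguments LDot {F R}.
Arguments LF {F R} _.
Arguments LR {F R} _.
Arguments LVar {F R} _.

(* A (finite or infinite) tree is its labelling of positions; a position is
   the list of child indices from the root (top-down).  Unused positions are
   mapped to None. *)
Definition tree (F R : Type) := seq nat -> option (lab F R).

(* A TRS: finite signature Sigma, set of rules R; rule mu has arity n (the
   number of variables of its lhs, named x_0 .. x_{n-1}), lhs and rhs. *)
Record trs := TRS {
  fs : finType;
  fs_ar : fs -> nat;
  rs : Type;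
  rs_ar : rs -> nat;
  lhs : rs -> tree fs rs;
  rhs : rs -> tree fs rs }.

Section Defs.
Variable T : trs.
Notation ptree := (tree (fs T) (rs T)).
Notation plab := (lab (fs T) (rs T)).

Definition arity (a : plab) : nat :=
  match a with
  | LF f => fs_ar f
  | LR mu => rs_ar mu
  | LDot => 2
  | LVar _ => 0
  end.

Definition wf (t : ptree) : Prop :=
  t [::] <> None /\
  forall p i, (exists a, t (rcons p i) = Some a) <->
              (exists a, t p = Some a /\ i < arity a).

Definition node (a : plab) (args : nat -> ptree) : ptree :=
  fun p => match p with
           | [::] => Some a
           | i :: q => if i < arity a then args i q else None
           end.

Definition mkDot (a b : ptree) : ptree :=
  node LDot (fun i => if i == 0 then a else b).

(* infinite concatenation  prod_i psi_i = psi_0 . (psi_1 . ( ... )) *)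
Fixpoint infcat_from (psi : nat -> ptree) (k : nat) (p : seq nat) : option plab :=
  match p with
  | [::] => Some LDot
  | 0 :: q => psi k q
  | 1 :: q => infcat_from psi k.+1 q
  | _ => None
  end.
Definition infcat (psi : nat -> ptree) : ptree := infcat_from psi 0.

Definition subtree (t : ptree) (p : seq nat) : ptree := fun q => t (p ++ q).

Definition repl (s : ptree) (p : seq nat) (u : ptree) : ptree :=
  fun q => if take (size p) q == p then u (drop (size p) q) else s q.

Fixpoint subst (t : ptree) (sigma : nat -> ptree) (p : seq nat) {struct p}
  : option plab :=
  match t [::] with
  | Some (LVar i) => sigma i p
  | _ => match p with
         | [::] => t [::]
         | j :: q => subst (fun q' => t (j :: q')) sigma q
         end
  end.

Definition sigma_var_tree (t : ptree) : Prop :=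
  forall p, t p <> Some LDot /\ forall mu, t p <> Some (LR mu).

Definition left_linear_trs : Prop :=
  forall mu : rs T,
    wf (lhs mu) /\ wf (rhs mu) /\ sigma_var_tree (lhs mu) /\ sigma_var_tree (rhs mu) /\
     (exists d, forall p, d < size p -> lhs mu p = None) /\
     (exists f, lhs mu [::] = Some (LF f)) /\
     (forall i, i < rs_ar mu ->
        exists p, lhs mu p = Some (LVar i) /\
                  forall q, lhs mu q = Some (LVar i) -> q = p) /\
     (forall p i, lhs mu p = Some (LVar i) -> i < rs_ar mu) /\
     (forall p i, rhs mu p = Some (LVar i) -> i < rs_ar mu).

Definition multistep (t : ptree) : Prop :=
  wf t /\ forall p, t p <> Some LDot /\ forall i, t p <> Some (LVar i).

Definition rule_free (t : ptree) : Prop := forall p mu, t p <> Some (LR mu).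

Definition tlim (u : nat -> ptree) (t : ptree) : Prop :=
  forall d, exists N, forall k, N <= k ->
    forall q, size q <= d -> u k q = t q.

(* one rewrite step, at position p, in the auxiliary system
   mu(x_0,..,x_{n-1}) -> rr mu [x_0,..,x_{n-1}] on Sigma^R-terms *)
Definition step_at (rr : rs T -> ptree) (s : ptree) (p : seq nat) (t : ptree) : Prop :=
  exists mu, s p = Some (LR mu) /\
    t = repl s p (subst (rr mu) (fun i => subtree s (rcons p i))).

Definition sc_red (rr : rs T -> ptree) (s t : ptree) : Prop :=
  (exists n (u : nat -> ptree), [/\ u 0 = s, u n = t &
      forall k, k < n -> exists p, step_at rr (u k) p (u k.+1)])
  \/
  (exists (u : nat -> ptree) (ps : nat -> seq nat),
      [/\ u 0 = s,
          forall k, step_at rr (u k) (ps k) (u k.+1),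
          (forall d, exists N, forall k, N <= k -> d <= size (ps k)) &
          tlim u t]).

Definition is_src (psi s : ptree) : Prop := sc_red (@lhs T) psi s /\ rule_free s.
Definition is_tgt (psi t : ptree) : Prop := sc_red (@rhs T) psi t /\ rule_free t.
Definition convergent_ms (psi : ptree) : Prop := exists t, is_tgt psi t.

Definition mind_ge (psi : ptree) (d : nat) : Prop :=
  forall p mu, psi p = Some (LR mu) -> d <= size p.

(* proof terms: PT t s Tg  means t is a proof term with source s and set of
   targets Tg (empty iff t is not convergent). *)
Inductive PT : ptree -> ptree -> (ptree -> Prop) -> Prop :=
| PT_ms psi s : multistep psi -> is_src psi s -> PT psi s (is_tgt psi)
| PT_dot a b s1 T1 s2 T2 :
    PT a s1 T1 -> PT b s2 T2 -> T1 s2 -> PT (mkDot a b) s1 T2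
| PT_inf (psi s : nat -> ptree) (Tg : nat -> ptree -> Prop) :
    (forall i, PT (psi i) (s i) (Tg i)) ->
    (forall i, Tg i (s i.+1)) ->
    PT (infcat psi) (s 0) (tlim (fun i => s i.+1))
| PT_F f (psi s : nat -> ptree) (Tg : nat -> ptree -> Prop) :
    (forall j, j < fs_ar f -> PT (psi j) (s j) (Tg j)) ->
    PT (node (LF f) psi) (node (LF f) s)
       (fun t => exists ts, (forall j, j < fs_ar f -> Tg j (ts j)) /\
                            t = node (LF f) ts)
| PT_R mu (psi s : nat -> ptree) (Tg : nat -> ptree -> Prop) :
    (forall j, j < rs_ar mu -> PT (psi j) (s j) (Tg j)) ->
    PT (node (LR mu) psi) (subst (lhs mu) s)
       (fun t => exists ts, (forall j, j < rs_ar mu -> Tg j (ts j)) /\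
                            t = subst (rhs mu) ts).

Definition is_pt (t : ptree) : Prop := exists s Tg, PT t s Tg.

Inductive peq : ptree -> ptree -> Prop :=
| pe_refl t : is_pt t -> peq t t
| pe_sym a b : peq a b -> peq b a
| pe_trans a b c : peq a b -> peq b c -> peq a c
| pe_cong_node (x : plab) (a b : nat -> ptree) :
    (forall j, j < arity x -> peq (a j) (b j)) ->
    is_pt (node x a) -> is_pt (node x b) -> peq (node x a) (node x b)
| pe_cong_inf (a b : nat -> ptree) :
    (forall i, peq (a i) (b i)) ->
    is_pt (infcat a) -> is_pt (infcat b) -> peq (infcat a) (infcat b)
| pe_src psi s Tg : PT psi s Tg -> is_pt (mkDot s psi) -> peq (mkDot s psi) psi
| pe_tgt psi s Tg t : PT psi s Tg -> Tg t -> is_pt (mkDot psi t) ->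
    peq (mkDot psi t) psi
| pe_assoc a b c : is_pt (mkDot (mkDot a b) c) -> is_pt (mkDot a (mkDot b c)) ->
    peq (mkDot (mkDot a b) c) (mkDot a (mkDot b c))
| pe_F_dot f (a b : nat -> ptree) :
    is_pt (mkDot (node (LF f) a) (node (LF f) b)) ->
    is_pt (node (LF f) (fun j => mkDot (a j) (b j))) ->
    peq (mkDot (node (LF f) a) (node (LF f) b)) (node (LF f) (fun j => mkDot (a j) (b j)))
| pe_F_inf f (a : nat -> nat -> ptree) :
    is_pt (infcat (fun i => node (LF f) (a i))) ->
    is_pt (node (LF f) (fun j => infcat (fun i => a i j))) ->
    peq (infcat (fun i => node (LF f) (a i))) (node (LF f) (fun j => infcat (fun i => a i j)))
| pe_R_out mu (psi s : nat -> ptree) (Tg : nat -> ptree -> Prop) :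
    (forall j, j < rs_ar mu -> PT (psi j) (s j) (Tg j)) ->
    is_pt (node (LR mu) psi) ->
    is_pt (mkDot (node (LR mu) s) (subst (rhs mu) psi)) ->
    peq (node (LR mu) psi) (mkDot (node (LR mu) s) (subst (rhs mu) psi))
| pe_R_in mu (psi s : nat -> ptree) (Tg : nat -> ptree -> Prop) (t : nat -> ptree) :
    (forall j, j < rs_ar mu -> PT (psi j) (s j) (Tg j)) ->
    (forall j, j < rs_ar mu -> Tg j (t j)) ->
    is_pt (node (LR mu) psi) ->
    is_pt (mkDot (subst (lhs mu) psi) (node (LR mu) t)) ->
    peq (node (LR mu) psi) (mkDot (subst (lhs mu) psi) (node (LR mu) t)).

Definition one_step (t : ptree) : Prop :=
  multistep t /\ exists p mu, t p = Some (LR mu) /\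
    forall q nu, t q = Some (LR nu) -> q = p.

Definition os_depth (t : ptree) (d : nat) : Prop :=
  one_step t /\ exists p mu, t p = Some (LR mu) /\ size p = d.

Inductive fsw : ptree -> nat -> Prop :=
| fsw_nf t : multistep t -> rule_free t -> fsw t 0
| fsw_one t : one_step t -> fsw t 1
| fsw_dot a b n m : fsw a n -> fsw b m -> fsw (mkDot a b) (n + m).

Inductive component : ptree -> nat -> ptree -> Prop :=
| comp_one t : one_step t -> component t 0 t
| comp_l a b n i c : fsw a n -> i < n -> component a i c ->
    component (mkDot a b) i c
| comp_r a b n i c : fsw a n -> n <= i -> component b (i - n) c ->
    component (mkDot a b) i c.

End Defs.

From mathcomp Require Import all_boot zify.
From Stdlib Require Import Classical FunctionalExtensionality ClassicalEpsilon.

(* Since the target of [psi] is rule-free, [psi] cannot start with an infinite spine of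
   collapsing rule symbols (rules [mu] with right-hand side [x_i], each in the i-th argument
   of the previous one): reduction steps preserve such a spine, so it would survive in the
   limit.  Hence [psi] starts with finitely many collapsing symbols, below which the root is a
   function symbol or a non-collapsing rule symbol.  Each collapsing [mu(psi_1,..,psi_n)] is
   permuted into the root step [mu(src psi_1,..,src psi_n)] followed by [psi_i].  At the bottom
   of the spine, a function symbol leaves [phi] as the remaining multistep, and a
   non-collapsing [mu] contributes one more root step followed by [phi = r[psi_1,..,psi_n]],
   whose root is the head symbol of [r].  This [phi] converges because the arguments kept by
   [r] converge to subterms of the target of [psi].

   Strongly convergent reductions are handled as limits of finite reductions whose steps lie
   deeper and deeper; in this form they compose with contexts and substitutions. *)

Set Implicit Arguments.
Unset Strict Implicit.
Unset Printing Implicit Defensive.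

Lemma least_counterexample (P : nat -> Prop) :
  (exists k, ~ P k) -> exists k, ~ P k /\ forall m, m < k -> P m.
Proof.
move=> [k Hk]; elim/ltn_ind: k Hk => k IH Hk.
case: (classic (exists m, m < k /\ ~ P m)) => [[m [Hm Hpm]]|Hno]; first exact: IH m Hm Hpm.
exists k; split => // m Hm; apply: NNPP => Hp; apply: Hno; by exists m.
Qed.

Lemma eventually_all_lt n (P : nat -> nat -> Prop) :
  (forall j, j < n -> exists N, forall k, N <= k -> P j k) ->
  exists N, forall j, j < n -> forall k, N <= k -> P j k.
Proof.
elim: n => [|n IH] H; first by exists 0.
have [N1 HN1] := IH (fun j Hj => H j (ltnW Hj)).
have [N2 HN2] := H n (ltnSn n).
exists (maxn N1 N2) => j; rewrite ltnS leq_eqVlt => /orP [/eqP ->|Hj] k.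
  by rewrite geq_max => /andP [_]; apply: HN2.
by rewrite geq_max => /andP [? _]; apply: HN1.
Qed.

Definition diverges (f : nat -> nat) := forall D, exists N, forall k, N <= k -> D <= f k.

Lemma diverges_minn f g : diverges f -> diverges g -> diverges (fun k => minn (f k) (g k)).
Proof.
move=> Hf Hg D; have [N1 H1] := Hf D; have [N2 H2] := Hg D.
by exists (maxn N1 N2) => k; rewrite geq_max leq_min => /andP [/H1 -> /H2 ->].
Qed.

Lemma common_lower_bound n (dd : nat -> nat -> nat) :
  (forall j, j < n -> diverges (dd j)) ->
  exists d0, (forall j k, j < n -> d0 k <= dd j k) /\ diverges d0.
Proof.
elim: n => [|n IH] H; first by exists id; split => // D; exists D.
have [d0 [Hle Hd0]] := IH (fun j Hj => H j (ltnW Hj)).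
exists (fun k => minn (dd n k) (d0 k)); split; last exact: diverges_minn (H n _) Hd0.
move=> j k; rewrite ltnS leq_eqVlt => /orP [/eqP ->|Hj]; first exact: geq_minl.
exact: leq_trans (geq_minr _ _) (Hle j k Hj).
Qed.

Fixpoint lag_bound (d0 : nat -> nat) k :=
  if k is k'.+1 then minn (d0 k) (lag_bound d0 k').+1 else d0 0.

Lemma lag_bound_le d0 k : lag_bound d0 k <= d0 k.
Proof. by case: k => [|k] //=; exact: geq_minl. Qed.

Lemma diverges_lag_bound d0 : diverges d0 -> diverges (lag_bound d0).
Proof.
move=> Hd D; have [N HN] := Hd D.
have Hi : forall i, minn D i <= lag_bound d0 (N + i).
  elim=> [|i IHi]; first by rewrite minn0.
  by rewrite addnS /=; have := HN (N + i).+1 (leqW (leq_addr _ _)); lia.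
exists (N + D) => k Hk; have := Hi (k - N); rewrite subnKC; last by lia.
by rewrite (minn_idPl _) //; lia.
Qed.

Section Trees.
Variable T : trs.
Notation tr := (tree (fs T) (rs T)).
Notation lb := (lab (fs T) (rs T)).

Definition child (t : tr) (i : nat) : tr := fun q => t (i :: q).

Definition upd (f : nat -> tr) (i : nat) (x : tr) : nat -> tr :=
  fun k => if k == i then x else f k.

Lemma upd_upd f i x y : upd (upd f i x) i y = upd f i y.
Proof. apply: functional_extensionality => k; rewrite /upd; by case: (k == i). Qed.

Lemma upd_same f i : upd f i (f i) = f.
Proof. apply: functional_extensionality => k; rewrite /upd; by case: eqP => [->|]. Qed.

Lemma wf_prefix (t : tr) p q : wf t -> t (p ++ q) <> None -> t p <> None.
Proof.
move=> [_ Hw]; elim/last_ind: q => [|q i IH]; first by rewrite cats0.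
rewrite -rcons_cat => H; apply: IH.
have [b [Hb _]] : exists b, t (p ++ q) = Some b /\ i < arity b.
  by apply/Hw; case: (t (rcons (p ++ q) i)) H => [a|] // _; exists a.
by rewrite Hb.
Qed.

Lemma wf_root_arity (t : tr) k q : wf t -> t (k :: q) <> None ->
  exists a, t [::] = Some a /\ k < arity a.
Proof.
move=> Hw H; have := @wf_prefix t [:: k] q Hw H.
case E: (t [:: k]) => [b|] // _.
by apply/(Hw.2 [::] k); exists b.
Qed.

Lemma wf_child_none (t : tr) a i q : wf t -> t [::] = Some a -> arity a <= i ->
  t (i :: q) = None.
Proof.
move=> Hw Ha Hi; case E: (t (i :: q)) => [b|] //.
have [a' [Ha' Hlt]] := @wf_root_arity t i q Hw (ltac:(by rewrite E)).
move: Ha'; rewrite Ha => -[Heq]; subst a'.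
by move: Hi; rewrite leqNgt Hlt.
Qed.

Lemma eq_node (a : lb) (f g : nat -> tr) :
  (forall i, i < arity a -> f i = g i) -> node a f = node a g.
Proof.
move=> H; apply: functional_extensionality => [[|i q]] //=.
by case: ifP => // /H ->.
Qed.

Lemma node_child (t : tr) a : wf t -> t [::] = Some a -> t = node a (child t).
Proof.
move=> Hw Ha; apply: functional_extensionality => [[|i q]] //=.
case: ifP => // Hi; apply: wf_child_none Hw Ha _.
by rewrite leqNgt Hi.
Qed.

Lemma child_node (a : lb) (g : nat -> tr) i : i < arity a -> child (node a g) i = g i.
Proof. by move=> Hi; apply: functional_extensionality => q; rewrite /child /= Hi. Qed.

Lemma wf_child (t : tr) a i : wf t -> t [::] = Some a -> i < arity a -> wf (child t i).
Proof.
move=> Hw Ha Hi; split; last by move=> p k; exact: (Hw.2 (i :: p) k).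
have [b Hb] : exists b, t (rcons [::] i) = Some b by apply/(Hw.2 [::] i); exists a.
by rewrite /child -[[:: i]]/(rcons [::] i) Hb.
Qed.

Lemma wf_node (a : lb) (f : nat -> tr) :
  (forall i, i < arity a -> wf (f i)) -> wf (node a f).
Proof.
move=> H; split => // [[|j p]] i /=.
  split; first by case: ifP => [Hi _|_ [x Hx] //]; exists a.
  move=> [b [[<-] Hi]]; rewrite Hi.
  by case: (H i Hi) => Hn _; case E: (f i [::]) Hn => [c|] // _; exists c.
case: ifP => Hj; last by split => -[x Hx] //; case: Hx.
exact: ((H j Hj).2 p i).
Qed.

Definition wfat (u : tr) p := forall i,
  (exists a, u (rcons p i) = Some a) <-> (exists a, u p = Some a /\ i < arity a).

Lemma wfat_node (a : lb) (g : nat -> tr) p :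
  (forall i, i < arity a -> g i [::] <> None) ->
  (forall k p', p = k :: p' -> k < arity a -> wfat (g k) p') -> wfat (node a g) p.
Proof.
move=> H1 H2; case: p H2 => [|k p] H2 i /=.
  case: ifP => Hi; last by split => [[b Hb] | [b [[<-] Hb']]] //; rewrite Hi in Hb'.
  split => _; first by exists a.
  by case E: (g i [::]) (H1 i Hi) => [b|] // _; exists b.
case: ifP => Hk; first exact: H2.
by split => -[b Hb] //; case: Hb.
Qed.

(** ** Substitution *)

Lemma root_var_dec (t : tr) :
  (exists j, t [::] = Some (LVar j)) \/ (forall j, t [::] <> Some (LVar j)).
Proof. case: (t [::]) => [[f|mu||j]|]; try (by right); by left; exists j. Qed.

Lemma subst_nil (t : tr) s : subst t s [::] =
  match t [::] with Some (LVar j) => s j [::] | o => o end.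
Proof. by rewrite /=; case: (t [::]) => [[]|]. Qed.

Lemma subst_empty (t : tr) s p : (forall q, t q = None) -> subst t s p = None.
Proof. elim: p t => [|k p IH] t H /=; rewrite H //; exact: IH. Qed.

Lemma subst_var (t : tr) s j : t [::] = Some (LVar j) -> subst t s = s j.
Proof. by move=> H; apply: functional_extensionality => [[|k q]] /=; rewrite H. Qed.

Lemma subst_cons (t : tr) s k q : (forall j, t [::] <> Some (LVar j)) ->
  subst t s (k :: q) = subst (child t k) s q.
Proof. move=> H /=; case E: (t [::]) => [[f|mu||j]|] //; by case: (H j). Qed.

Lemma subst_fun (t : tr) s f : wf t -> t [::] = Some (LF f) ->
  subst t s = node (LF f) (fun i => subst (child t i) s).
Proof.
move=> Hw H; apply: functional_extensionality => [[|i q]] /=; rewrite H //.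
case: ifP => // Hi; apply: subst_empty => r.
by apply: (wf_child_none _ Hw H); rewrite /= leqNgt Hi.
Qed.

Lemma subst_at_var (t : tr) s q j p : wf t -> t q = Some (LVar j) ->
  subst t s (q ++ p) = s j p.
Proof.
elim: q t => [|k q IH] t Hw Hq; first by rewrite /= (subst_var s Hq).
have [a [Ha Hk]] := @wf_root_arity t k q Hw (ltac:(by rewrite Hq)).
have Hnv : forall j, t [::] <> Some (LVar j) by move=> j' E; rewrite Ha in E; case: E Hk => ->.
rewrite cat_cons subst_cons //; exact: IH (wf_child Hw Ha Hk) Hq.
Qed.

Lemma subst_some (t : tr) s p a : subst t s p = Some a ->
  (t p = Some a /\ forall j, a <> LVar j) \/
  exists q q' j, [/\ p = q ++ q', t q = Some (LVar j) & s j q' = Some a].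
Proof.
elim: p t => [|k p IH] t /=.
{ case E: (t [::]) => [[f|mu||j]|] H; try discriminate H.
  4: by right; exists [::], [::], j.
  all: by left; case: H => <-. }
case E: (t [::]) => [[f|mu||j]|] H; try discriminate H.
4: by right; exists [::], (k :: p), j.
all: case: (IH _ H) => [[H1 H2]|[q [q' [j [-> H1 H2]]]]]; [by left | right].
all: by exists (k :: q), q', j.
Qed.

Lemma subst_ext_le (t : tr) s s' p : (forall j q, size q <= size p -> s j q = s' j q) ->
  subst t s p = subst t s' p.
Proof.
elim: p t => [|k p IH] t H.
  rewrite !subst_nil; case: (t [::]) => [[f|mu||j]|] //; exact: H.
case: (root_var_dec t) => [[j E]|Hnv]; first by rewrite !(subst_var _ E); apply: H.
rewrite !subst_cons //; apply: IH => j q Hq; apply: H => /=; lia.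
Qed.

Lemma subst_ext_lt (t : tr) s s' p : (forall j, t [::] <> Some (LVar j)) ->
  (forall j q, size q < size p -> s j q = s' j q) -> subst t s p = subst t s' p.
Proof.
case: p => [|k p] Hnv H.
  by rewrite !subst_nil; case E: (t [::]) => [[f|mu||j]|] //; case: (Hnv j).
rewrite !subst_cons //; apply: subst_ext_le => j q Hq; apply: H => /=; lia.
Qed.

Lemma eq_subst (t : tr) s s' :
  (forall q j, t q = Some (LVar j) -> s j = s' j) -> subst t s = subst t s'.
Proof.
move=> H; apply: functional_extensionality => p.
elim: p t H => [|k p IH] t H.
  case: (root_var_dec t) => [[j E]|Hnv]; first by rewrite !(subst_var _ E) (H _ _ E).
  by rewrite !subst_nil; case E: (t [::]) => [[f|mu||j]|] //; case: (Hnv j).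
case: (root_var_dec t) => [[j E]|Hnv]; first by rewrite !(subst_var _ E) (H _ _ E).
rewrite !subst_cons //; apply: IH => q j Hq; exact: (H (k :: q) j Hq).
Qed.

Lemma wfat_subst (t : tr) s p : wf t ->
  (forall q q' j, p = q ++ q' -> t q = Some (LVar j) -> s j [::] <> None /\ wfat (s j) q') ->
  (forall i j, t (rcons p i) = Some (LVar j) -> s j [::] <> None) ->
  wfat (subst t s) p.
Proof.
elim: p t => [|k p IH] t Hw H H2.
  case: (root_var_dec t) => [[j E]|Hnv].
    by rewrite (subst_var s E); case: (H [::] [::] j erefl E).
  case E: (t [::]) => [b|]; last by case: Hw; rewrite E.
  move=> i; rewrite -[rcons [::] i]/[:: i] subst_cons // subst_nil /child subst_nil E.
  have -> : (match b with LF f => Some (LF f) | LR r => Some (LR r)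
               | LDot => Some LDot | LVar j => s j [::] end) = Some b.
    by case: b E => // j /Hnv.
  have Hti := Hw.2 [::] i; rewrite /= E in Hti.
  case E2: (t [:: i]) Hti => [[g|nu||j']|] Hti; try (by rewrite -Hti).
  have Hn := H2 i j' E2.
  split => _; first by apply/Hti; eexists; eauto.
  by case E3: (s j' [::]) Hn => [c|] // _; exists c.
case: (root_var_dec t) => [[j E]|Hnv].
  by rewrite (subst_var s E); case: (H [::] (k :: p) j erefl E).
case E: (t [::]) => [b|]; last by case: Hw; rewrite E.
move=> i; rewrite rcons_cons !subst_cons //.
case Hk: (k < arity b).
  apply: (IH (child t k) (wf_child Hw E Hk)) => [q q' j Hq Hj|i' j Hj].
    by apply: (H (k :: q) q' j); rewrite ?Hq.
  exact: (H2 i' j Hj).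
have Hn : forall r, child t k r = None.
  by move=> r; apply: (wf_child_none _ Hw E); rewrite leqNgt Hk.
by rewrite !subst_empty //; split => -[x Hx] //; case: Hx.
Qed.

Lemma wf_subst (t : tr) s : wf t ->
  (forall q j, t q = Some (LVar j) -> wf (s j)) -> wf (subst t s).
Proof.
move=> Hw H; split.
  case: (root_var_dec t) => [[j E]|Hnv]; first by rewrite (subst_var s E); case: (H _ _ E).
  rewrite subst_nil; case E: (t [::]) => [[f|mu||j]|] //; first by case: (Hnv j).
  by case: Hw; rewrite E.
move=> p; apply: wfat_subst Hw _ _ => [q q' j _ Hj|i j Hj]; case: (H _ _ Hj) => H1 H2 //.
by split.
Qed.

Definition pattern (n : nat) (r : tr) := wf r /\ forall p x, r p = Some x ->
  (exists f, x = LF f) \/ (exists j, x = LVar j /\ j < n).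

Lemma pattern_child n r f i :
  pattern n r -> r [::] = Some (LF f) -> i < fs_ar f -> pattern n (child r i).
Proof. by move=> [Hw Hl] Hr Hi; split; [exact: wf_child Hw Hr Hi | move=> p x; exact: Hl]. Qed.

Lemma pattern_root n r : pattern n r ->
  (exists f, r [::] = Some (LF f)) \/ (exists j, r [::] = Some (LVar j) /\ j < n).
Proof.
move=> [Hw Hl]; case E: (r [::]) => [x|]; last by case: Hw; rewrite E.
by case: (Hl _ _ E) => [[f ->]|[j [-> Hj]]]; [left; exists f | right; exists j].
Qed.

Lemma child_subst (r : tr) s f k : r [::] = Some (LF f) ->
  child (subst r s) k = subst (child r k) s.
Proof.
move=> Hf; apply: functional_extensionality => p.
by rewrite /child subst_cons // => j; rewrite Hf.
Qed.

End Trees.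

(** ** Depth-bounded reductions *)

Section Reduction.
Variable T : trs.
Notation tr := (tree (fs T) (rs T)).
Notation lb := (lab (fs T) (rs T)).
Variable rr : rs T -> tr.

Inductive red_ge (d : nat) : tr -> tr -> Prop :=
| red_ge_refl s : red_ge d s s
| red_ge_step s p s1 t : d <= size p -> step_at rr s p s1 -> red_ge d s1 t -> red_ge d s t.

Lemma red_ge_trans d s x y : red_ge d s x -> red_ge d x y -> red_ge d s y.
Proof. elim=> // s0 p s1 t Hp Hs _ IH Hy; exact: red_ge_step Hp Hs (IH Hy). Qed.

Lemma red_ge_le d d' s t : d' <= d -> red_ge d s t -> red_ge d' s t.
Proof.
move=> Hd; elim=> [s0|s0 p s1 t0 Hp Hs _ IH]; first exact: red_ge_refl.
exact: red_ge_step (leq_trans Hd Hp) Hs IH.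
Qed.

Lemma red_ge_single d s p t : d <= size p -> step_at rr s p t -> red_ge d s t.
Proof. move=> Hp Hs; exact: red_ge_step Hp Hs (red_ge_refl _ _). Qed.

Lemma red_ge_pointwise (F : (nat -> tr) -> tr) n d d' (f g : nat -> tr) :
  (forall j (h : nat -> tr) x, j < n -> red_ge d (h j) x -> red_ge d' (F h) (F (upd h j x))) ->
  (forall h h', (forall j, j < n -> h j = h' j) -> F h = F h') ->
  (forall j, j < n -> red_ge d (f j) (g j)) -> red_ge d' (F f) (F g).
Proof.
move=> Hupd Hext H.
pose h m := fun j => if j < m then g j else f j.
suff Hm : forall m, m <= n -> red_ge d' (F f) (F (h m)).
  have <- : F (h n) = F g by apply: Hext => j Hj; rewrite /h Hj.
  exact: Hm.
elim=> [|m IH] Hm.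
  have -> : h 0 = f by apply: functional_extensionality.
  exact: red_ge_refl.
apply: red_ge_trans (IH (ltnW Hm)) _.
have -> : h m.+1 = upd (h m) m (g m).
  apply: functional_extensionality => i; rewrite /h /upd ltnS leq_eqVlt.
  by case: (eqVneq i m) => [->|].
by apply: Hupd => //; rewrite /h ltnn; apply: H.
Qed.

Lemma repl_nil (s : tr) u : repl s [::] u = u.
Proof. by apply: functional_extensionality => q; rewrite /repl /= take0 drop0. Qed.

Lemma repl_keep (s : tr) p u q : size q < size p -> repl s p u q = s q.
Proof.
move=> H; rewrite /repl take_oversize ?(ltnW H) //.
by case: eqP => // E; move: H; rewrite E ltnn.
Qed.

Lemma repl_repl (s : tr) q p u :
  repl s q (repl (subtree s q) p u) = repl s (q ++ p) u.
Proof.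
apply: functional_extensionality => r; rewrite /repl size_cat.
case: (eqVneq (take (size q) r) q) => [Hq|Hq].
  have Er : r = q ++ drop (size q) r by rewrite -{1}(cat_take_drop (size q) r) Hq.
  set r' := drop (size q) r in Er; clearbody r'; subst r.
  rewrite takeD take_size_cat // drop_size_cat // addnC -drop_drop drop_size_cat //.
  by rewrite eqseq_cat // eqxx.
case: eqP => // E; case/eqP: Hq.
by rewrite -(take_takel _ (leq_addr (size p) (size q))) E take_size_cat.
Qed.

Lemma child_repl (s : tr) k p u i :
  child (repl s (k :: p) u) i = if k == i then repl (child s i) p u else child s i.
Proof.
apply: functional_extensionality => q; rewrite /child /repl /= eqseq_cons.
by case: (eqVneq i k) => [->|].
Qed.

Lemma step_keep s p t q : step_at rr s p t -> size q < size p -> t q = s q.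
Proof. by case=> mu [_ ->]; apply: repl_keep. Qed.

Lemma red_ge_keep d s t q : red_ge d s t -> size q < d -> t q = s q.
Proof.
elim=> // s0 p s1 t0 Hp Hs _ IH Hq.
by rewrite IH // (step_keep Hs) //; exact: leq_trans Hq Hp.
Qed.

Lemma red_ge1_root x y : red_ge 1 x y -> y [::] = x [::].
Proof. by move=> H; apply: red_ge_keep H _. Qed.

Lemma step_at_node (a : lb) (f : nat -> tr) i p x : i < arity a ->
  step_at rr (f i) p x -> step_at rr (node a f) (i :: p) (node a (upd f i x)).
Proof.
move=> Hi [mu [Hmu ->]]; exists mu; split; first by rewrite /= Hi.
have -> : (fun j => subtree (node a f) (rcons (i :: p) j)) = (fun j => subtree (f i) (rcons p j)).
  by apply: functional_extensionality => j; apply: functional_extensionality => q;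
     rewrite /subtree /= Hi.
apply: functional_extensionality => [[|k q]]; first by rewrite /repl.
rewrite /repl /= eqseq_cons /upd.
by case: (eqVneq k i) => [->|] //=; rewrite Hi.
Qed.

Lemma red_ge_node_arg (a : lb) i d (f : nat -> tr) x : i < arity a ->
  red_ge d (f i) x -> red_ge d.+1 (node a f) (node a (upd f i x)).
Proof.
move=> Hi H; move Es: (f i) H => s H; elim: H f Es => [s0|s0 p s1 t Hp Hs _ IH] f Hf.
  by rewrite -Hf upd_same; apply: red_ge_refl.
apply: (red_ge_step (p := i :: p) (s1 := node a (upd f i s1))) => //.
  by apply: step_at_node; rewrite ?Hf.
by have := IH (upd f i s1); rewrite upd_upd; apply; rewrite /upd eqxx.
Qed.

Lemma red_ge_node (a : lb) d (f g : nat -> tr) :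
  (forall i, i < arity a -> red_ge d (f i) (g i)) -> red_ge d.+1 (node a f) (node a g).
Proof.
apply: red_ge_pointwise => [j h x Hj|h h' /eq_node //]; exact: red_ge_node_arg.
Qed.

Lemma subst_upd_notin (t : tr) s j z r :
  (forall r1 r2, r = r1 ++ r2 -> t r1 <> Some (LVar j)) ->
  subst t (upd s j z) r = subst t s r.
Proof.
elim: r t => [|k r IH] t H.
  rewrite !subst_nil; case E: (t [::]) => [[f|mu||j']|] //.
  by rewrite /upd; case: eqP => // Ej; subst j'; case: (H [::] [::] erefl).
case: (root_var_dec t) => [[j' E]|Hnv].
  rewrite !(subst_var _ E) /upd; case: eqP => // Ej; subst j'.
  by case: (H [::] (k :: r) erefl).
rewrite !subst_cons //; apply: IH => r1 r2 Hr.
by apply: (H (k :: r1) r2); rewrite Hr.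
Qed.

Lemma subst_upd_at (t : tr) s j q z : wf t -> t q = Some (LVar j) ->
  (forall q', t q' = Some (LVar j) -> q' = q) ->
  subst t (upd s j z) = repl (subst t s) q z.
Proof.
move=> Hw Hq Hu; apply: functional_extensionality => r; rewrite /repl.
case: eqP => [Ht|Ht].
  by rewrite -{1}(cat_take_drop (size q) r) Ht (subst_at_var _ _ Hw Hq) /upd eqxx.
apply: subst_upd_notin => r1 r2 Hr Hr1.
by apply: Ht; rewrite Hr (Hu _ Hr1) take_size_cat.
Qed.

Lemma subtree_subst_var (t : tr) s q j p : wf t -> t q = Some (LVar j) ->
  subtree (subst t s) (q ++ p) = subtree (s j) p.
Proof.
move=> Hw Hq; apply: functional_extensionality => r.
by rewrite /subtree -catA (subst_at_var _ _ Hw Hq).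
Qed.

Lemma step_at_subst (t : tr) s q j p x : wf t -> t q = Some (LVar j) ->
  (forall q', t q' = Some (LVar j) -> q' = q) ->
  step_at rr (s j) p x -> step_at rr (subst t s) (q ++ p) (subst t (upd s j x)).
Proof.
move=> Hw Hq Hu [mu [Hmu ->]]; exists mu; split; first by rewrite (subst_at_var _ _ Hw Hq).
have -> : (fun i => subtree (subst t s) (rcons (q ++ p) i)) = (fun i => subtree (s j) (rcons p i)).
  apply: functional_extensionality => i.
  by rewrite -cats1 -catA cats1 (subtree_subst_var _ _ Hw Hq).
rewrite (subst_upd_at _ _ Hw Hq Hu) -repl_repl; congr (repl _ _ (repl _ _ _)).
by apply: functional_extensionality => r; rewrite /subtree (subst_at_var _ _ Hw Hq).
Qed.

Lemma red_ge_subst_arg (t : tr) q j d (s : nat -> tr) y : wf t -> t q = Some (LVar j) ->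
  (forall q', t q' = Some (LVar j) -> q' = q) ->
  red_ge d (s j) y -> red_ge (d + size q) (subst t s) (subst t (upd s j y)).
Proof.
move=> Hw Hq Hu H; move Ex: (s j) H => x H.
elim: H s Ex => [s0|s0 p s1 t0 Hp Hs _ IH] s Hs0.
  by rewrite -Hs0 upd_same; apply: red_ge_refl.
apply: (red_ge_step (p := q ++ p) (s1 := subst t (upd s j s1))).
- by rewrite size_cat addnC leq_add2l.
- by apply: step_at_subst => //; rewrite Hs0.
- by have := IH (upd s j s1); rewrite upd_upd; apply; rewrite /upd eqxx.
Qed.

Lemma red_ge_subst (t : tr) n d (s s' : nat -> tr) : wf t ->
  (forall q j, t q = Some (LVar j) -> j < n /\ 0 < size q) ->
  (forall j q q', t q = Some (LVar j) -> t q' = Some (LVar j) -> q = q') ->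
  (forall j, j < n -> exists q, t q = Some (LVar j)) ->
  (forall j, j < n -> red_ge d (s j) (s' j)) -> red_ge d.+1 (subst t s) (subst t s').
Proof.
move=> Hw Hv Hu Hex; apply: red_ge_pointwise => [j h x Hj Hx|h h' Hh].
  have [q Hq] := Hex j Hj.
  apply: red_ge_le (red_ge_subst_arg Hw Hq _ Hx) => [|q' Hq']; last exact: Hu Hq' Hq.
  by case: (Hv _ _ Hq) => _ Hs; rewrite -addn1 leq_add2l.
by apply: eq_subst => q j /Hv [/Hh].
Qed.

Lemma red_ge_child d (s t : tr) i : red_ge d.+1 s t -> red_ge d (child s i) (child t i).
Proof.
elim=> [s0|s0 p s1 t0 Hp [mu [Hmu Hs1]] _ IH]; first exact: red_ge_refl.
case: p Hp Hmu Hs1 => [|k p] Hp Hmu Hs1 //.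
have := child_repl s0 k p (subst (rr mu) (fun j => subtree s0 (rcons (k :: p) j))) i.
rewrite -Hs1; case: (eqVneq k i) => [Ek|_] Hc; last by rewrite Hc in IH.
subst k; apply: (red_ge_step (p := p) (s1 := child s1 i)) => //; rewrite Hc.
by exists mu.
Qed.

Lemma red_ge_root_fun d (s t : tr) f : red_ge d s t -> s [::] = Some (LF f) ->
  red_ge (maxn d 1) s t /\ t [::] = Some (LF f).
Proof.
elim=> [s0|s0 p s1 t0 Hp Hs _ IH] Hf; first by split => //; exact: red_ge_refl.
case: p Hp Hs => [|k p] Hp Hs; first by case: Hs => mu [H _]; rewrite H in Hf.
have [IH1 IH2] := IH (ltac:(by rewrite (step_keep Hs))); split => //.
by apply: red_ge_step _ Hs IH1; rewrite geq_max Hp.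
Qed.

Lemma red_ge_root_split d (x y : tr) : red_ge d x y -> ~ red_ge 1 x y ->
  exists w w', [/\ red_ge 1 x w, step_at rr w [::] w' & red_ge d w' y].
Proof.
elim=> [s0|s0 p s1 t0 Hp Hs Ha IH] Hn; first by case: Hn; exact: red_ge_refl.
case: p Hp Hs => [|k p] Hp Hs; first by exists s0, s1; split => //; exact: red_ge_refl.
have [|w [w' [H1 H2 H3]]] := IH; first by move=> H; apply: Hn; exact: red_ge_step _ Hs H.
by exists w, w'; split => //; exact: red_ge_step _ Hs H1.
Qed.

End Reduction.

(** ** Concatenating infinitely many finite segments *)

Section Flatten.
Variable A : Type.
Variables (nn : nat -> nat) (vv : nat -> nat -> A).
Hypothesis vv_glue : forall k, vv k (nn k) = vv k.+1 0.
Hypothesis nn_unbounded : forall N, exists k, N <= k /\ 0 < nn k.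

Definition seg_start k := \sum_(m < k) nn m.

Lemma seg_startS k : seg_start k.+1 = seg_start k + nn k.
Proof. by rewrite /seg_start big_ord_recr. Qed.

Lemma seg_start_mono a b : a <= b -> seg_start a <= seg_start b.
Proof.
move=> /subnKC <-; elim: (b - a) => [|i IH]; first by rewrite addn0.
by rewrite addnS seg_startS (leq_trans IH (leq_addr _ _)).
Qed.

Lemma seg_start_unbounded g : exists k, g < seg_start k.+1.
Proof.
suff [k Hk] : exists k, g < seg_start k by exists k; apply: leq_trans Hk (seg_start_mono _).
elim: g => [|g [k Hk]].
  by have [k [_ Hk]] := nn_unbounded 0; exists k.+1; rewrite seg_startS addn_gt0 Hk orbT.
have [k' [Hk' Hp]] := nn_unbounded k; exists k'.+1; rewrite seg_startS.
by have := seg_start_mono Hk'; lia.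
Qed.

Definition seg_of g := ex_minn (seg_start_unbounded g).

Lemma seg_ofP g : seg_start (seg_of g) <= g < seg_start (seg_of g).+1.
Proof.
rewrite /seg_of; case: ex_minnP => k -> Hmin; rewrite andbT.
case: k Hmin => [|k] Hmin; first by rewrite /seg_start big_ord0.
by rewrite leqNgt; apply/negP => /Hmin; rewrite ltnn.
Qed.

Lemma seg_of_ge g K : seg_start K <= g -> K <= seg_of g.
Proof.
move=> HK; rewrite leqNgt; apply/negP => /seg_start_mono.
by case/andP: (seg_ofP g) => _; lia.
Qed.

Lemma vv_empty_segments a b : a <= b -> seg_start a = seg_start b -> vv a 0 = vv b 0.
Proof.
move=> /subnKC <-; elim: (b - a) => [|i IH]; first by rewrite addn0.
rewrite addnS seg_startS => HS.
have Hle := seg_start_mono (leq_addr i a).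
have Hn0 : nn (a + i) = 0 by lia.
by rewrite -vv_glue Hn0 IH //; lia.
Qed.

Definition flatten g := vv (seg_of g) (g - seg_start (seg_of g)).

Lemma flattenE k g : seg_start k <= g <= seg_start k.+1 -> flatten g = vv k (g - seg_start k).
Proof.
case/andP=> H1 H2; rewrite /flatten; case/andP: (seg_ofP g) => A1 A2.
case: (ltngtP k (seg_of g)) => [Hlt|Hgt|<-] //; last first.
  by have := seg_start_mono Hgt; rewrite seg_startS in A2 *; lia.
have := seg_start_mono Hlt; rewrite seg_startS in H2 * => H3.
have -> : g - seg_start (seg_of g) = 0 by lia.
have -> : g - seg_start k = nn k by lia.
by rewrite vv_glue; apply/esym/vv_empty_segments => //; rewrite seg_startS; lia.
Qed.

End Flatten.

(** ** Strongly convergent reductions as limits of depth-increasing segments *)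

Section LimitReduction.
Variable T : trs.
Notation tr := (tree (fs T) (rs T)).
Variable rr : rs T -> tr.

Definition lim_red (s t : tr) := exists (u : nat -> tr) (dd : nat -> nat),
  [/\ u 0 = s, forall k, red_ge rr (dd k) (u k) (u k.+1),
      diverges dd & tlim u t].

Lemma tlim_const (u : nat -> tr) N t : (forall k, N <= k -> u k = u N) -> tlim u t -> t = u N.
Proof.
move=> Hc Hl; apply: functional_extensionality => q.
have [N' HN'] := Hl (size q).
by rewrite -(Hc (maxn N N')) ?leq_maxl // (HN' (maxn N N')) ?leq_maxr.
Qed.

Lemma lim_red_refl s : lim_red s s.
Proof.
exists (fun _ => s), id; split => //; first by move=> k; apply: red_ge_refl.
  by move=> D; exists D.
by move=> D; exists 0.
Qed.

Lemma lim_red_cons d s x t : red_ge rr d s x -> lim_red x t -> lim_red s t.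
Proof.
move=> Ha [u [dd [H0 Hs Hd Hl]]].
exists (fun k => if k is k'.+1 then u k' else s), (fun k => if k is k'.+1 then dd k' else d).
split => //.
- by case=> [|k] //; rewrite H0.
- move=> D; have [N HN] := Hd D; exists N.+1 => [[|k]] //= Hk; exact: HN.
- move=> D; have [N HN] := Hl D; exists N.+1 => [[|k]] //= Hk; exact: HN.
Qed.

Lemma lim_red_shift (u : nat -> tr) dd t k :
  (forall k, red_ge rr (dd k) (u k) (u k.+1)) ->
  diverges dd -> tlim u t -> lim_red (u k) t.
Proof.
move=> Hs Hd Hl; exists (fun i => u (k + i)), (fun i => dd (k + i)); split.
- by rewrite addn0.
- by move=> i; rewrite addnS; exact: Hs.
- move=> D; have [N HN] := Hd D; exists N => i Hi; apply: HN; lia.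
- move=> D; have [N HN] := Hl D; exists N => i Hi; apply: HN; lia.
Qed.

Lemma sc_red_lim s t : sc_red rr s t -> lim_red s t.
Proof.
case=> [[n [u [H0 Hn Hk]]]|[u [ps [H0 Hs Hd Hl]]]].
  exists (fun k => u (minn k n)), (fun k => if k < n then 0 else k); split.
  - by rewrite min0n.
  - move=> k; case: ltnP => Hkn.
      rewrite (minn_idPl Hkn); have [p Hp] := Hk k Hkn.
      exact: red_ge_single (leq0n _) Hp.
    by rewrite (minn_idPr (leqW Hkn)); apply: red_ge_refl.
  - move=> D; exists (maxn n D) => k; rewrite geq_max => /andP [H1 H2].
    by rewrite ltnNge H1.
  - by move=> D; exists n => k Hkn q _; rewrite (minn_idPr Hkn) Hn.
exists u, (fun k => size (ps k)); split => // k.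
exact: red_ge_single (leqnn _) (Hs k).
Qed.

Lemma red_ge_seq d s t : red_ge rr d s t -> exists n (v : nat -> tr) (ps : nat -> seq nat),
  [/\ v 0 = s, v n = t &
      forall i, i < n -> d <= size (ps i) /\ step_at rr (v i) (ps i) (v i.+1)].
Proof.
elim=> [s0|s0 p s1 t0 Hp Hs _ [n [v [ps [H0 Hn Hst]]]]].
  by exists 0, (fun _ => s0), (fun _ => [::]).
exists n.+1, (fun k => if k is k'.+1 then v k' else s0), (fun k => if k is k'.+1 then ps k' else p).
by split => // [[|i]] Hi; [rewrite H0 | exact: Hst].
Qed.

Lemma red_ge_sc_red d s t : red_ge rr d s t -> sc_red rr s t.
Proof.
move=> /red_ge_seq [n [v [ps [H0 Hn Hst]]]]; left; exists n, v; split => // i /Hst [_ ?].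
by exists (ps i).
Qed.

Lemma sc_red_eventually_const (u : nat -> tr) dd t N :
  (forall k, red_ge rr (dd k) (u k) (u k.+1)) -> (forall k, N <= k -> u k.+1 = u k) ->
  tlim u t -> sc_red rr (u 0) t.
Proof.
move=> Hs Hu Hl.
have Hc : forall k, N <= k -> u k = u N.
  move=> k /subnKC <-; elim: (k - N) => [|i IH]; first by rewrite addn0.
  by rewrite addnS Hu ?leq_addr.
rewrite (tlim_const Hc Hl); apply: (@red_ge_sc_red 0).
elim: N {Hu Hc} => [|N IH]; first exact: red_ge_refl.
exact: red_ge_trans IH (red_ge_le (leq0n _) (Hs N)).
Qed.

Section Segments.
Variables (u : nat -> tr) (dd : nat -> nat) (t : tr).
Variables (nn : nat -> nat) (vv : nat -> nat -> tr) (pp : nat -> nat -> seq nat).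
Hypothesis vv0 : forall k, vv k 0 = u k.
Hypothesis vvn : forall k, vv k (nn k) = u k.+1.
Hypothesis vv_step : forall k i, i < nn k ->
  dd k <= size (pp k i) /\ step_at rr (vv k i) (pp k i) (vv k i.+1).
Hypothesis dd_diverges : diverges dd.
Hypothesis u_lim : tlim u t.
Hypothesis nn_unbounded : forall N, exists k, N <= k /\ 0 < nn k.

Lemma sc_red_flatten : sc_red rr (u 0) t.
Proof.
have Hglue : forall k, vv k (nn k) = vv k.+1 0 by move=> k; rewrite vvn vv0.
pose S := seg_start nn; pose sg := seg_of nn_unbounded.
have Hsg : forall g, S (sg g) <= g < S (sg g).+1 := seg_ofP nn_unbounded.
have Hin : forall g, g - S (sg g) < nn (sg g).
  by move=> g; move: (Hsg g); rewrite /S seg_startS; lia.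
have Hnext : forall g, flatten vv nn_unbounded g.+1 = vv (sg g) (g - S (sg g)).+1.
  move=> g; rewrite (flattenE Hglue nn_unbounded (k := sg g)) -?subSn //;
    move: (Hsg g) (Hin g); rewrite /S seg_startS; lia.
right; exists (flatten vv nn_unbounded), (fun g => pp (sg g) (g - S (sg g))); split.
- by rewrite (flattenE Hglue nn_unbounded (k := 0)) ?vv0 // /seg_start big_ord0.
- by move=> g; rewrite Hnext; exact: (vv_step (Hin g)).2.
- move=> D; have [K HK] := dd_diverges D; exists (S K) => g Hg.
  exact: leq_trans (HK _ (seg_of_ge nn_unbounded Hg)) (vv_step (Hin g)).1.
- move=> D; have [K1 HK1] := dd_diverges D.+1; have [K2 HK2] := u_lim D.
  exists (S (maxn K1 K2)) => g Hg q Hq.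
  have Hk := seg_of_ge nn_unbounded Hg.
  have Hk1 : K1 <= sg g := leq_trans (leq_maxl _ _) Hk.
  have Hk2 : K2 <= sg g := leq_trans (leq_maxr _ _) Hk.
  rewrite /flatten -/sg -(HK2 (sg g)) // -(vv0 (sg g)).
  elim: (g - S (sg g)) (ltnW (Hin g)) => [|i IH] Hi; first by [].
  rewrite (step_keep (vv_step Hi).2) ?IH ?(ltnW Hi) //.
  exact: leq_trans (leq_ltn_trans Hq (HK1 _ Hk1)) (vv_step Hi).1.
Qed.

End Segments.

Lemma not_eventually_zero (nn : nat -> nat) : ~ (exists N, forall k, N <= k -> nn k = 0) ->
  forall N, exists k, N <= k /\ 0 < nn k.
Proof.
move=> Hinf N; apply: NNPP => Hne; apply: Hinf; exists N => k Hk.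
by apply: NNPP => Hk2; apply: Hne; exists k; rewrite lt0n; split => //; apply/eqP.
Qed.

Lemma lim_red_sc_red s t : lim_red s t -> sc_red rr s t.
Proof.
move=> [u [dd [<- Hs Hd Hl]]].
pose seg_spec k (x : nat * ((nat -> tr) * (nat -> seq nat))) :=
  [/\ x.2.1 0 = u k, x.2.1 x.1 = u k.+1 &
      forall i, i < x.1 -> dd k <= size (x.2.2 i) /\ step_at rr (x.2.1 i) (x.2.2 i) (x.2.1 i.+1)].
have [seg Hseg] : exists seg, forall k, seg_spec k (seg k).
  by apply: choice => k; have [n [v [ps H]]] := red_ge_seq (Hs k); exists (n, (v, ps)).
pose nn k := (seg k).1; pose vv k := (seg k).2.1; pose pp k := (seg k).2.2.
have Hv0 : forall k, vv k 0 = u k by move=> k; case: (Hseg k).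
have Hvn : forall k, vv k (nn k) = u k.+1 by move=> k; case: (Hseg k).
have Hst : forall k i, i < nn k -> dd k <= size (pp k i) /\ step_at rr (vv k i) (pp k i) (vv k i.+1).
  by move=> k; case: (Hseg k).
case: (classic (exists N, forall k, N <= k -> nn k = 0)) => [[N HN]|/not_eventually_zero Hpos].
  by apply: (sc_red_eventually_const (N := N) Hs) Hl => k Hk; rewrite -Hvn HN // Hv0.
exact: sc_red_flatten Hv0 Hvn Hst Hd Hl Hpos.
Qed.

Lemma lim_red_child (s t : tr) f i : s [::] = Some (LF f) -> lim_red s t ->
  lim_red (child s i) (child t i).
Proof.
move=> Hf [u [dd [H0 Hs Hd Hl]]].
have Hroot : forall k, u k [::] = Some (LF f).
  by elim=> [|k IH]; [rewrite H0 | exact: (red_ge_root_fun (Hs k) IH).2].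
exists (fun k => child (u k) i), (fun k => (maxn (dd k) 1).-1); split.
- by rewrite H0.
- move=> k; apply: red_ge_child; rewrite prednK ?leq_max ?orbT //.
  exact: (red_ge_root_fun (Hs k) (Hroot k)).1.
- move=> D; have [N HN] := Hd D.+1; exists N => k Hk; have := HN k Hk; lia.
- move=> D; have [N HN] := Hl D.+1; exists N => k Hk q Hq; exact: HN.
Qed.

Lemma lim_red_subst_var n (r : tr) q j (a : nat -> tr) t : pattern n r -> r q = Some (LVar j) ->
  lim_red (subst r a) t -> lim_red (a j) (subtree t q).
Proof.
elim: q r t => [|k q IH] r t Hg Hq.
  by rewrite (subst_var _ Hq); have -> : subtree t [::] = t by apply: functional_extensionality.
move=> H.
have [b [Hb Hk]] := @wf_root_arity _ r k q Hg.1 (ltac:(by rewrite Hq)).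
case: (pattern_root Hg) => [[f Hf]|[j' [Hj' _]]]; last by rewrite Hj' in Hb; case: Hb => <- in Hk.
rewrite Hf in Hb; case: Hb => Hb; subst b.
have := lim_red_child k (ltac:(by rewrite /= Hf) : subst r a [::] = Some (LF f)) H.
by rewrite (child_subst _ _ Hf); exact: IH (pattern_child Hg Hf Hk) Hq.
Qed.

Lemma lim_red_root_rule (s t : tr) mu : s [::] = Some (LR mu) -> lim_red s t -> rule_free t ->
  exists w, [/\ red_ge rr 1 s w, w [::] = Some (LR mu) & lim_red (subst (rr mu) (child w)) t].
Proof.
move=> Hs [u [dd [H0 Hst Hd Hl]]] Hrf.
case: (classic (exists k, ~ red_ge rr 1 (u k) (u k.+1))) => [Hex|Hall]; last first.
  have Hr : forall k, u k [::] = Some (LR mu).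
    elim=> [|k IH]; first by rewrite H0.
    by rewrite (red_ge1_root (NNPP _ (fun H => Hall (ex_intro _ k H)))).
  have [N HN] := Hl 0; have := HN N (leqnn _) [::] (leqnn _); rewrite Hr => E.
  by case: (Hrf [::] mu).
have [k [Hk Hlt]] := least_counterexample Hex.
have Hpre : forall m, m <= k -> red_ge rr 1 (u 0) (u m).
  elim=> [|m IH] Hm; first exact: red_ge_refl.
  exact: red_ge_trans (IH (ltnW Hm)) (Hlt m Hm).
have [w [w' [H1 [nu [Hnu Hw']] H3]]] := red_ge_root_split (Hst k) Hk.
have Hw : red_ge rr 1 s w by rewrite -H0; exact: red_ge_trans (Hpre k (leqnn _)) H1.
have Hwr : w [::] = Some (LR mu) by rewrite (red_ge1_root Hw).
exists w; split => //.
move: Hnu; rewrite Hwr => -[Enu]; subst nu; rewrite repl_nil in Hw'.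
have -> : subst (rr mu) (child w) = w' by rewrite Hw'.
exact: lim_red_cons H3 (lim_red_shift k.+1 Hst Hd Hl).
Qed.

End LimitReduction.

Section SubstLimit.
Variable T : trs.
Notation tr := (tree (fs T) (rs T)).
Variables (rr : rs T -> tr) (n : nat) (U : nat -> nat -> tr).
Variables (dd : nat -> nat -> nat) (d0 : nat -> nat).
Hypothesis U_red : forall j k, red_ge rr (dd j k) (U j k) (U j k.+1).
Hypothesis d0_le : forall j k, j < n -> d0 k <= dd j k.

(* A variable of [r] at depth [m] receives [U j (k - m)] if [m < k], and [U j 0] otherwise. *)
Fixpoint subst_approx k (r : tr) : tr :=
  match k with
  | 0 => subst r (fun j => U j 0)
  | k'.+1 => match r [::] with
             | Some (LVar j) => U j k
             | Some (LF f) => node (LF f) (fun i => subst_approx k' (child r i))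
             | _ => r end end.

Lemma subst_approx_var k r j : r [::] = Some (LVar j) -> subst_approx k r = U j k.
Proof. by case: k => [|k] E; [rewrite /= (subst_var _ E) | rewrite /= E]. Qed.

Lemma red_ge_subst_approx k r : pattern n r ->
  red_ge rr (lag_bound d0 k) (subst_approx k r) (subst_approx k.+1 r).
Proof.
elim: k r => [|k IH] r Hr; case: (pattern_root Hr) => [[f Hf]|[j [Hj Hjn]]].
- have -> : subst_approx 1 r = subst_approx 0 r.
    by rewrite /= Hf (subst_fun _ Hr.1 Hf).
  exact: red_ge_refl.
- by rewrite !(subst_approx_var _ Hj); apply: red_ge_le (U_red j 0); exact: d0_le.
- rewrite /= Hf; apply: red_ge_le (geq_minr _ _) _.
  by apply: red_ge_node => i Hi; apply: IH; exact: pattern_child Hr Hf Hi.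
- rewrite !(subst_approx_var _ Hj); apply: red_ge_le (U_red j k.+1).
  exact: leq_trans (lag_bound_le _ _) (d0_le _ Hjn).
Qed.

Lemma subst_approx_lim (b : nat -> tr) r : pattern n r ->
  (forall j, tlim (U j) (b j)) -> tlim (fun k => subst_approx k r) (subst r b).
Proof.
move=> Hr Hlim D.
have [N HN] := @eventually_all_lt n (fun j k => forall q, size q <= D -> U j k q = b j q)
  (fun j _ => Hlim j D).
suff Happrox : forall p r k, pattern n r -> size p <= D -> N + size p <= k ->
    subst_approx k r p = subst r b p.
  by exists (N + D) => k Hk q Hq; apply: Happrox => //; lia.
elim=> [|i p IHp] {}r k {}Hr Hp Hk'; case: (pattern_root Hr) => [[f Hf]|[j [Hj Hjn]]];
  try by rewrite (subst_approx_var _ Hj) (subst_var _ Hj); apply: HN => //; lia.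
  by case: k Hk' => [|k] _; rewrite subst_nil /= Hf.
case: k Hk' => [|k] Hk'; first by move: Hk' => /=; lia.
rewrite subst_cons; last by move=> j; rewrite Hf.
rewrite /= Hf /node; case: ifP => Hi.
  by apply: IHp; [exact: pattern_child Hr Hf Hi | move: Hp => /=; lia | move: Hk' => /=; lia].
by rewrite subst_empty // => q'; apply: (wf_child_none _ Hr.1 Hf); rewrite /= leqNgt Hi.
Qed.

End SubstLimit.

Lemma lim_red_subst (T : trs) (rr : rs T -> tree (fs T) (rs T)) n r (a b : nat -> tree (fs T) (rs T)) :
  pattern n r -> (forall j, lim_red rr (a j) (b j)) -> lim_red rr (subst r a) (subst r b).
Proof.
move=> Hr H.
pose spec j (x : (nat -> tree (fs T) (rs T)) * (nat -> nat)) :=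
  [/\ x.1 0 = a j, forall k, red_ge rr (x.2 k) (x.1 k) (x.1 k.+1), diverges x.2 & tlim x.1 (b j)].
have [Ud HUd] : exists Ud, forall j, spec j (Ud j).
  by apply: (choice spec) => j; have [u [d Hu]] := H j; exists (u, d).
pose U j := (Ud j).1; pose dd j := (Ud j).2.
have U_red j k : red_ge rr (dd j k) (U j k) (U j k.+1) by case: (HUd j) => _ /(_ k).
have [d0 [Hd0 Hdiv]] : exists d0, (forall j k, j < n -> d0 k <= dd j k) /\ diverges d0.
  by apply: common_lower_bound => j _; case: (HUd j).
exists (fun k => subst_approx U k r), (lag_bound d0); split.
- by congr subst; apply: functional_extensionality => j; case: (HUd j).
- by move=> k; exact (red_ge_subst_approx U_red Hd0 k Hr).
- exact: diverges_lag_bound Hdiv.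
- by apply: subst_approx_lim Hr _ => j; case: (HUd j).
Qed.

(** ** Sources of multisteps *)

Section Source.
Variable T : trs.
Notation tr := (tree (fs T) (rs T)).
Hypothesis HT : left_linear_trs T.

Lemma sigma_var_pattern n (r : tr) : wf r -> sigma_var_tree r ->
  (forall p j, r p = Some (LVar j) -> j < n) -> pattern n r.
Proof.
move=> Hw Hs Hv; split => // p [f|mu||j] E.
- by left; exists f.
- by case: (Hs p) => _ /(_ mu).
- by case: (Hs p).
- by right; exists j; split => //; exact: Hv E.
Qed.

Lemma lhs_pattern (mu : rs T) : pattern (rs_ar mu) (lhs mu).
Proof. by have [? [? [? [? [? [? [? [? ?]]]]]]]] := HT mu; apply: sigma_var_pattern. Qed.

Lemma rhs_pattern (mu : rs T) : pattern (rs_ar mu) (rhs mu).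
Proof. by have [? [? [? [? [? [? [? [? ?]]]]]]]] := HT mu; apply: sigma_var_pattern. Qed.

Lemma rhs_collapse_arity (mu : rs T) i : rhs mu [::] = Some (LVar i) -> i < rs_ar mu.
Proof. by move=> Hr; case: (rhs_pattern mu) => _ /(_ _ _ Hr) [[f //]|[j [[<-] Hj]]]. Qed.

Lemma lhs_root (mu : rs T) : exists f, lhs mu [::] = Some (LF f).
Proof. by have [? [? [? [? [? [? [? [? ?]]]]]]]] := HT mu. Qed.

Lemma lhs_root_nonvar (mu : rs T) j : lhs mu [::] <> Some (LVar j).
Proof. by have [f ->] := lhs_root mu. Qed.

Lemma lhs_linear (mu : rs T) j q q' :
  lhs mu q = Some (LVar j) -> lhs mu q' = Some (LVar j) -> q = q'.
Proof.
have [_ [_ [_ [_ [_ [_ [Hex [Hlt _]]]]]]]] := HT mu => Hq Hq'.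
have [p [Hp Hu]] := Hex j (Hlt _ _ Hq).
by rewrite (Hu _ Hq) (Hu _ Hq').
Qed.

Lemma lhs_var_occurs (mu : rs T) j : j < rs_ar mu -> exists q, lhs mu q = Some (LVar j).
Proof.
have [_ [_ [_ [_ [_ [_ [Hex _]]]]]]] := HT mu => Hj.
by have [p [Hp _]] := Hex j Hj; exists p.
Qed.

Lemma lhs_var (mu : rs T) q j : lhs mu q = Some (LVar j) -> j < rs_ar mu /\ 0 < size q.
Proof.
move=> Hq; split; first by case: (lhs_pattern mu) => _ /(_ _ _ Hq) [[f //]|[j' [[->] ?]]].
by case: q Hq => // /lhs_root_nonvar.
Qed.

Lemma multistep_root (t : tr) : multistep t ->
  (exists f, t [::] = Some (LF f)) \/ (exists mu, t [::] = Some (LR mu)).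
Proof.
move=> [[Hw _] Hl]; case E: (t [::]) => [[f|mu||j]|].
- by left; exists f.
- by right; exists mu.
- by case: (Hl [::]); rewrite E.
- by case: (Hl [::]) => _ /(_ j); rewrite E.
- by case: Hw; rewrite E.
Qed.

Lemma multistep_child (t : tr) a i :
  multistep t -> t [::] = Some a -> i < arity a -> multistep (child t i).
Proof.
move=> [Hw Hl] E Hi; split; first exact: wf_child Hw E Hi.
by move=> p; exact: Hl (i :: p).
Qed.

Lemma multistep_node_rule (mu : rs T) (s : nat -> tr) :
  (forall j, j < rs_ar mu -> multistep (s j)) -> multistep (node (LR mu) s).
Proof.
move=> H; split; first by apply: wf_node => i Hi; exact: (H i Hi).1.
move=> [|i q] //=; case: ifP => // Hi; exact: (H i Hi).2.
Qed.

Lemma multistep_subst n (r : tr) (a : nat -> tr) : pattern n r ->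
  (forall j, j < n -> multistep (a j)) -> multistep (subst r a).
Proof.
move=> [Hw Hl] Ha; split.
  apply: wf_subst Hw _ => q j Hq.
  by case: (Hl _ _ Hq) => [[f //]|[j' [[<-] Hj]]]; exact: (Ha j Hj).1.
move=> p; split => [|i] /subst_some [[H1 H2]|[q [q' [j [_ Hq Hs]]]]].
- by case: (Hl _ _ H1) => [[f //]|[j [Hj _]]].
- by case: (Hl _ _ Hq) => [[f //]|[j' [[<-] Hj]]]; case: ((Ha j Hj).2 q').
- by case: (H2 i).
- by case: (Hl _ _ Hq) => [[f //]|[j' [[<-] Hj]]]; case: ((Ha j Hj).2 q') => _ /(_ i).
Qed.

Fixpoint src_upto (d : nat) (t : tr) : tr :=
  match d with
  | 0 => t
  | d'.+1 => match t [::] with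
             | Some (LF f) => node (LF f) (fun i => src_upto d' (child t i))
             | Some (LR mu) => subst (lhs mu) (fun j => src_upto d' (child t j))
             | _ => t end end.

(* Left-hand sides are not variables, so [src_upto] is final at depths [< d]. *)
Definition src (t : tr) : tr := fun p => src_upto (size p).+1 t p.

Lemma src_upto_stable n p t d d' : size p <= n -> size p < d -> size p < d' ->
  src_upto d t p = src_upto d' t p.
Proof.
elim: n p t d d' => [|n IH] p t [|d] [|d'] Hn Hd Hd' //=.
  case: (t [::]) => [[f|mu||j]|] //; first by case: p Hn {Hd Hd'}.
  by apply: subst_ext_lt => [j|j q Hq]; [exact: lhs_root_nonvar | lia].
case: (t [::]) => [[f|mu||j]|] //.
  case: p Hn Hd Hd' => [|i p] //= Hn Hd Hd'; case: ifP => // _; apply: IH; lia.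
apply: subst_ext_lt => [j|j q Hq]; first exact: lhs_root_nonvar.
apply: IH; lia.
Qed.

Lemma src_fun (t : tr) f : t [::] = Some (LF f) ->
  src t = node (LF f) (fun i => src (child t i)).
Proof. by move=> E; apply: functional_extensionality => [[|i q]]; rewrite /src /= E. Qed.

Lemma src_rule (t : tr) mu : t [::] = Some (LR mu) ->
  src t = subst (lhs mu) (fun j => src (child t j)).
Proof.
move=> E; apply: functional_extensionality => p; rewrite /src [src_upto _ t]/= E.
apply: subst_ext_lt => [j|j q Hq]; first exact: lhs_root_nonvar.
apply: (@src_upto_stable (size q)); lia.
Qed.

Lemma red_ge_src_upto d (t : tr) : multistep t ->
  red_ge (@lhs T) d (src_upto d t) (src_upto d.+1 t).
Proof.
elim: d t => [|d IH] t Ht; case: (multistep_root Ht) => [[f E]|[mu E]] /=; rewrite E.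
- rewrite -(@eq_node _ _ (child t)) // -(node_child Ht.1 E); exact: red_ge_refl.
- by apply: (red_ge_single (p := [::])) => //; exists mu; rewrite repl_nil.
- by apply: red_ge_node => i Hi; apply: IH; exact: multistep_child Ht E Hi.
apply: (red_ge_subst (n := rs_ar mu)) (lhs_pattern mu).1 _ _ _ _.
- by move=> q j; exact: lhs_var.
- by move=> j q q'; exact: lhs_linear.
- by move=> j; exact: lhs_var_occurs.
- by move=> j Hj; apply: IH; exact: multistep_child Ht E Hj.
Qed.

Lemma lim_red_src (t : tr) : multistep t -> lim_red (@lhs T) t (src t).
Proof.
move=> Ht; exists (src_upto^~ t), id; split => //.
- by move=> d; exact: red_ge_src_upto.
- by move=> D; exists D.
- move=> D; exists D.+1 => k Hk q Hq; rewrite /src; apply: (@src_upto_stable (size q)); lia.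
Qed.

Lemma src_label n (t : tr) p a : size p = n -> multistep t -> src t p = Some a ->
  exists f, a = LF f.
Proof.
elim/ltn_ind: n t p a => n IH t p a Hn Ht.
case: (multistep_root Ht) => [[f E]|[mu E]].
  rewrite (src_fun E); case: p Hn => [|i q] Hn /=; first by case=> <-; exists f.
  case: ifP => // Hi; apply: (IH (size q)) => //; [by rewrite -Hn | exact: multistep_child Ht E Hi].
rewrite (src_rule E) => /subst_some [[H1 H2]|[q [q' [j [Hp Hq Hs]]]]].
  by case: (lhs_pattern mu) => _ /(_ _ _ H1) [//|[j [Hj _]]]; case: (H2 j).
have [Hj Hsz] := lhs_var Hq.
apply: (IH (size q')) Hs => //; first by rewrite -Hn Hp size_cat; lia.
exact: multistep_child Ht E Hj.
Qed.

Lemma src_root (t : tr) : multistep t -> src t [::] <> None.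
Proof.
move=> Ht; case: (multistep_root Ht) => [[f E]|[mu E]]; first by rewrite (src_fun E).
by rewrite (src_rule E) subst_nil; have [f ->] := lhs_root mu.
Qed.

Lemma src_wfat n (t : tr) p : size p = n -> multistep t -> wfat (src t) p.
Proof.
elim/ltn_ind: n t p => n IH t p Hn Ht.
case: (multistep_root Ht) => [[f E]|[mu E]].
  rewrite (src_fun E); apply: wfat_node => [i Hi|k p' Hp Hk].
    by apply: src_root; exact: multistep_child Ht E Hi.
  by apply: (IH (size p')); [rewrite -Hn Hp | | exact: multistep_child Ht E Hk].
rewrite (src_rule E); apply: wfat_subst => [|q q' j Hp Hq|i j Hq].
- exact: (lhs_pattern mu).1.
- have [Hj Hsz] := lhs_var Hq; have Hc := multistep_child Ht E Hj.
  split; first exact: src_root.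
  by apply: (IH (size q')) => //; rewrite -Hn Hp size_cat; lia.
- have [Hj _] := lhs_var Hq; apply: src_root; exact: multistep_child Ht E Hj.
Qed.

Lemma multistep_src (t : tr) : multistep t -> multistep (src t).
Proof.
move=> Ht; split; first split.
- exact: src_root.
- by move=> p; exact: (src_wfat erefl Ht).
- by move=> p; split => [|i] /(src_label erefl Ht) [].
Qed.

Lemma rule_free_src (t : tr) : multistep t -> rule_free (src t).
Proof. by move=> Ht p mu /(src_label erefl Ht) []. Qed.

Lemma src_subst n (r : tr) (a : nat -> tr) : pattern n r ->
  src (subst r a) = subst r (fun j => src (a j)).
Proof.
move=> Hr; apply: functional_extensionality => p.
elim: p r Hr => [|i p IH] r Hr;
  case: (pattern_root Hr) => [[f Hf]|[j [Hj _]]]; try by rewrite !(subst_var _ Hj).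
  by rewrite (subst_fun _ Hr.1 Hf) (src_fun (f := f)) ?(subst_fun _ Hr.1 Hf).
rewrite (subst_fun _ Hr.1 Hf) (src_fun (f := f)) // (subst_fun _ Hr.1 Hf) /=.
by case: ifP => // Hi; rewrite child_node //; apply: IH; exact: pattern_child Hr Hf Hi.
Qed.

End Source.

(** ** Collapsing redexes at the root *)

Section Collapse.
Variable T : trs.
Notation tr := (tree (fs T) (rs T)).
Variable rr : rs T -> tr.

CoInductive inf_collapse (s : tr) : Prop :=
  InfCollapse mu i : s [::] = Some (LR mu) -> rr mu [::] = Some (LVar i) ->
    inf_collapse (child s i) -> inf_collapse s.

Inductive fin_collapse (s : tr) : Prop :=
| FinCollapseStop : (forall mu i, s [::] = Some (LR mu) -> rr mu [::] <> Some (LVar i)) ->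
    fin_collapse s
| FinCollapseStep mu i : s [::] = Some (LR mu) -> rr mu [::] = Some (LVar i) ->
    fin_collapse (child s i) -> fin_collapse s.

(* A step inside the collapsing spine only changes its subtree; one at its head
   replaces [s] by its collapsed argument, which is again on the spine. *)
Lemma inf_collapse_step (s s' : tr) p : step_at rr s p s' -> inf_collapse s -> inf_collapse s'.
Proof.
elim: p s s' => [|k p IH] s s' [nu [Hnu ->]] [mu i Hs Hr Hc].
  move: Hnu; rewrite Hs => -[<-]; rewrite repl_nil.
  by rewrite -[fun j => _]/(child s) (subst_var _ Hr).
apply: (InfCollapse (mu := mu) (i := i)) => //.
rewrite child_repl; case: (eqVneq k i) => [Ek|//]; subst k.
by apply: IH Hc; exists nu.
Qed.

Lemma inf_collapse_red_ge d (s t : tr) : red_ge rr d s t -> inf_collapse s -> inf_collapse t.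
Proof. elim=> // s0 p s1 t0 _ Hs _ IH H; apply: IH; exact: inf_collapse_step Hs H. Qed.

Lemma lim_red_inf_collapse (s t : tr) : lim_red rr s t -> rule_free t -> ~ inf_collapse s.
Proof.
move=> [u [dd [H0 Hst Hd Hl]]] Hrf Hs.
have Hu : forall k, inf_collapse (u k).
  by elim=> [|k IH]; [rewrite H0 | exact: inf_collapse_red_ge (Hst k) IH].
have [N HN] := Hl 0; have := HN N (leqnn _) [::] (leqnn _).
by case: (Hu N) => mu i -> _ _ E; case: (Hrf [::] mu).
Qed.

Lemma not_fin_collapse (s : tr) : ~ fin_collapse s -> inf_collapse s.
Proof.
move: s; cofix CIH => s Hn.
case: (classic (exists mu i, s [::] = Some (LR mu) /\ rr mu [::] = Some (LVar i))).
  move=> [mu [i [H1 H2]]]; apply: (InfCollapse H1 H2); apply: CIH => Hc.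
  by apply: Hn; exact: FinCollapseStep H1 H2 Hc.
move=> Hno; case: Hn; apply: FinCollapseStop => mu i H1 H2; apply: Hno; by exists mu, i.
Qed.

Lemma lim_red_fin_collapse (s t : tr) : lim_red rr s t -> rule_free t -> fin_collapse s.
Proof. move=> H Hr; apply: NNPP => /not_fin_collapse; exact: lim_red_inf_collapse H Hr. Qed.

End Collapse.

(** ** Proof terms *)

Section ProofTerms.
Variable T : trs.
Notation tr := (tree (fs T) (rs T)).
Hypothesis HT : left_linear_trs T.

Lemma convergent_lim_red (psi : tr) : convergent_ms psi ->
  exists t, lim_red (@rhs T) psi t /\ rule_free t.
Proof. by move=> [t [H1 H2]]; exists t; split => //; apply: sc_red_lim. Qed.

Lemma lim_red_collapse (psi t : tr) mu i : psi [::] = Some (LR mu) ->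
  rhs mu [::] = Some (LVar i) -> lim_red (@rhs T) psi t -> rule_free t ->
  lim_red (@rhs T) (child psi i) t.
Proof.
move=> Hs Hr H Hrf; have [w [H1 H2 H3]] := lim_red_root_rule Hs H Hrf.
rewrite (subst_var _ Hr) in H3; exact: lim_red_cons (red_ge_child i H1) H3.
Qed.

(* Arguments of [psi] that survive in the right-hand side converge to subtrees of the
   rule-free limit; the erased ones need not converge and are left unreduced. *)
Lemma convergent_contractum (psi t : tr) mu : psi [::] = Some (LR mu) ->
  lim_red (@rhs T) psi t -> rule_free t -> convergent_ms (subst (rhs mu) (child psi)).
Proof.
move=> Hs H Hrf; have [w [H1 H2 H3]] := lim_red_root_rule Hs H Hrf.
pose arg_lim j (b : tr) := lim_red (@rhs T) (child psi j) b /\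
  ((exists q, rhs mu q = Some (LVar j)) -> rule_free b).
have [b Hb] : exists b, forall j, arg_lim j (b j).
  apply: (choice arg_lim) => j; case: (classic (exists q, rhs mu q = Some (LVar j))) => [[q Hq]|Hno].
    exists (subtree t q); split => [|_ p nu]; last exact: Hrf.
    exact: lim_red_cons (red_ge_child j H1) (lim_red_subst_var (rhs_pattern HT mu) Hq H3).
  by exists (child psi j); split => [|Hc]; [exact: lim_red_refl | case: Hno].
exists (subst (rhs mu) b); split.
  by apply: lim_red_sc_red; apply: lim_red_subst (rhs_pattern HT mu) _ => j; case: (Hb j).
move=> p nu /subst_some [[H4 _]|[q [q' [j [_ Hq H5]]]]].
  by case: (HT mu) => [_ [_ [_ [/(_ p) [_ /(_ nu)]]]]].
exact: ((Hb j).2 (ex_intro _ q Hq)) H5.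
Qed.

Lemma PT_multistep (t : tr) : multistep t -> PT t (src t) (is_tgt t).
Proof.
move=> Ht; apply: (PT_ms Ht); split; last exact: rule_free_src.
by apply: lim_red_sc_red; exact: lim_red_src.
Qed.

Lemma PT_rule_free (x : tr) : multistep x -> rule_free x -> PT x x (is_tgt x) /\ is_tgt x x.
Proof.
move=> Hm Hr; have Hsc : forall rr, sc_red rr x x by left; exists 0, (fun _ => x).
by split; [apply: PT_ms Hm _ |]; split.
Qed.

Definition src_args (psi : tr) j := src (child psi j).

Lemma PT_rule_src_args (psi : tr) mu : multistep psi -> psi [::] = Some (LR mu) ->
  PT (node (LR mu) (src_args psi)) (src psi)
     (fun t => exists ts, (forall j, j < rs_ar mu -> is_tgt (src_args psi j) (ts j)) /\
                          t = subst (rhs mu) ts).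
Proof.
move=> Hm Hmu; rewrite (src_rule HT Hmu) -/(src_args psi).
apply: (PT_R (Tg := fun j => is_tgt (src_args psi j))) => j Hj.
have Hc := multistep_child Hm Hmu Hj.
exact: (PT_rule_free (multistep_src HT Hc) (rule_free_src HT Hc)).1.
Qed.

Lemma is_tgt_src_args (psi : tr) mu j : multistep psi -> psi [::] = Some (LR mu) ->
  j < rs_ar mu -> is_tgt (src_args psi j) (src_args psi j).
Proof.
move=> Hm Hmu Hj; have Hc := multistep_child Hm Hmu Hj.
exact: (PT_rule_free (multistep_src HT Hc) (rule_free_src HT Hc)).2.
Qed.

Lemma PT_contract (psi : tr) mu : multistep psi -> psi [::] = Some (LR mu) ->
  PT (mkDot (node (LR mu) (src_args psi)) (subst (rhs mu) (child psi)))
     (src psi) (is_tgt (subst (rhs mu) (child psi))).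
Proof.
move=> Hm Hmu; have Hargs j := @multistep_child _ _ _ j Hm Hmu.
apply: PT_dot (PT_rule_src_args Hm Hmu) (PT_multistep _) _.
  exact: multistep_subst (rhs_pattern HT mu) Hargs.
exists (src_args psi); split; first by move=> j; exact: is_tgt_src_args.
exact: src_subst (rhs_pattern HT mu).
Qed.

Lemma peq_contract (psi : tr) mu : multistep psi -> psi [::] = Some (LR mu) ->
  peq psi (mkDot (node (LR mu) (src_args psi)) (subst (rhs mu) (child psi))).
Proof.
move=> Hm Hmu; have Hargs j := @multistep_child _ _ _ j Hm Hmu.
rewrite {1}(node_child Hm.1 Hmu); apply: (pe_R_out (Tg := fun j => is_tgt (child psi j))).
- by move=> j Hj; exact: PT_multistep (Hargs j Hj).
- by rewrite -(node_child Hm.1 Hmu); exists (src psi), (is_tgt psi); exact: PT_multistep.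
- by exists (src psi), (is_tgt (subst (rhs mu) (child psi))); exact: PT_contract.
Qed.

End ProofTerms.

(** ** Splitting off the steps at the root *)

Section Split.
Variable T : trs.
Notation tr := (tree (fs T) (rs T)).
Hypothesis HT : left_linear_trs T.

Lemma mkDot_inj (a b a' b' : tr) : mkDot a b = mkDot a' b' -> a = a' /\ b = b'.
Proof.
move=> E; split; apply: functional_extensionality => q.
  by have := congr1 (fun f => f (0 :: q)) E.
by have := congr1 (fun f => f (1 :: q)) E.
Qed.

Lemma component_nondot (t c : tr) i : component t i c -> t [::] <> Some LDot -> c = t.
Proof. by case => // a b n i' c' _ _ _ H; case: H. Qed.

Lemma component_dotP (a b c : tr) i : component (mkDot a b) i c ->
  (exists n, [/\ fsw a n, i < n & component a i c]) \/
  (exists n, [/\ fsw a n, n <= i & component b (i - n) c]).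
Proof.
move E: (mkDot a b) => t H; case: H E.
- by move=> t0 [[_ Hl] _] E; subst t0; case: (Hl [::]).
- by move=> a' b' n i' c' Hf Hi Hc /mkDot_inj [Ha Hb]; subst a' b'; left; exists n.
- by move=> a' b' n i' c' Hf Hi Hc /mkDot_inj [Ha Hb]; subst a' b'; right; exists n.
Qed.

Lemma fsw_node_rule (mu : rs T) (s : nat -> tr) n : fsw (node (LR mu) s) n -> n = 1.
Proof.
move E: (node (LR mu) s) => t H; case: H E => //.
- by move=> t0 _ Hr E; subst t0; case: (Hr [::] mu).
- by move=> a b n0 m _ _ E; have := congr1 (fun f => f [::]) E.
Qed.

Lemma os_depth0_node_rule (mu : rs T) (s : nat -> tr) :
  (forall j, j < rs_ar mu -> multistep (s j) /\ rule_free (s j)) ->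
  os_depth (node (LR mu) s) 0.
Proof.
move=> H; split; last by exists [::], mu.
split; first by apply: multistep_node_rule => j Hj; case: (H j Hj).
exists [::], mu; split => // [[|i q]] nu //=.
by case: ifP => // Hi; case: (H i Hi) => _ /(_ q nu).
Qed.

Definition root_steps (chi : tr) :=
  exists n, fsw chi n /\ forall i c, i < n -> component chi i c -> os_depth c 0.

Lemma root_steps_rule_free (chi : tr) : multistep chi -> rule_free chi -> root_steps chi.
Proof. by move=> Hm Hr; exists 0; split => //; exact: fsw_nf. Qed.

Lemma root_steps_cons (mu : rs T) (s : nat -> tr) chi :
  (forall j, j < rs_ar mu -> multistep (s j) /\ rule_free (s j)) ->
  root_steps chi -> root_steps (mkDot (node (LR mu) s) chi).
Proof.
move=> /os_depth0_node_rule Hos [n [Hfsw Hcomp]].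
exists (1 + n); split; first exact: fsw_dot (fsw_one Hos.1) Hfsw.
move=> i c Hi /component_dotP [[n0 [_ _ Hc]]|[n0 [/fsw_node_rule -> Hle Hc]]].
  by rewrite (component_nondot Hc).
by apply: Hcomp Hc; lia.
Qed.

Lemma root_steps_node_rule (mu : rs T) (s : nat -> tr) :
  (forall j, j < rs_ar mu -> multistep (s j) /\ rule_free (s j)) ->
  root_steps (node (LR mu) s).
Proof.
move=> /os_depth0_node_rule Hos; exists 1; split; first exact: fsw_one Hos.1.
by move=> i c _ Hc; rewrite (component_nondot Hc).
Qed.

Definition outermost_split (psi chi phi : tr) :=
  [/\ peq psi (mkDot chi phi),
      (exists T1 s2 T2, [/\ PT chi (src psi) T1, PT phi s2 T2 & T1 s2]),
      root_steps chi, multistep phi /\ convergent_ms phi & mind_ge phi 1].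

Lemma src_args_spec (psi : tr) mu j : multistep psi -> psi [::] = Some (LR mu) ->
  j < rs_ar mu -> multistep (src_args psi j) /\ rule_free (src_args psi j).
Proof.
move=> Hm Hmu Hj; have Hc := multistep_child Hm Hmu Hj.
by split; [exact: multistep_src | exact: rule_free_src].
Qed.

Lemma outermost_split_fun (psi : tr) f : multistep psi -> convergent_ms psi ->
  psi [::] = Some (LF f) -> outermost_split psi (src psi) psi.
Proof.
move=> Hm Hc Hf; have [PTs Hts] := PT_rule_free (multistep_src HT Hm) (rule_free_src HT Hm).
have PTp := PT_multistep HT Hm.
split.
- apply: pe_sym (pe_src PTp _).
  by exists (src psi), (is_tgt psi); exact: PT_dot PTs PTp Hts.
- by exists (is_tgt (src psi)), (src psi), (is_tgt psi).
- exact: root_steps_rule_free (multistep_src HT Hm) (rule_free_src HT Hm).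
- by [].
- by move=> [|k p] nu //; rewrite Hf.
Qed.

Lemma outermost_split_rule (psi : tr) mu g : multistep psi -> convergent_ms psi ->
  psi [::] = Some (LR mu) -> rhs mu [::] = Some (LF g) ->
  outermost_split psi (node (LR mu) (src_args psi)) (subst (rhs mu) (child psi)).
Proof.
move=> Hm Hc Hmu Hg; have Hargs j := @multistep_child _ _ _ j Hm Hmu.
have Hphi : multistep (subst (rhs mu) (child psi)).
  exact: multistep_subst (rhs_pattern HT mu) Hargs.
split.
- exact: peq_contract.
- do 3 eexists; split; [exact: PT_rule_src_args | exact: PT_multistep Hphi |].
  exists (src_args psi); split; first by move=> j; exact: is_tgt_src_args.
  exact: src_subst (rhs_pattern HT mu).
- by apply: root_steps_node_rule => j; exact: src_args_spec.
- split => //; have [t [Hl Hrf]] := convergent_lim_red Hc.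
  exact (convergent_contractum HT Hmu Hl Hrf).
- by move=> [|k p] nu //; rewrite subst_nil Hg.
Qed.

Lemma outermost_split_collapse (psi : tr) mu i chi phi :
  multistep psi -> psi [::] = Some (LR mu) -> rhs mu [::] = Some (LVar i) ->
  outermost_split (child psi i) chi phi ->
  outermost_split psi (mkDot (node (LR mu) (src_args psi)) chi) phi.
Proof.
move=> Hm Hmu Hr [Hpe [T1 [s2 [T2 [PTchi PTphi HT1]]]] Hsteps Hphi Hmind].
have Hi := rhs_collapse_arity HT Hr.
have E : subst (rhs mu) (child psi) = child psi i by rewrite (subst_var _ Hr).
have PTc := PT_rule_src_args HT Hm Hmu.
have Htgt : (exists ts, (forall j, j < rs_ar mu -> is_tgt (src_args psi j) (ts j)) /\
              src (child psi i) = subst (rhs mu) ts).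
  exists (src_args psi); split; first by move=> j; exact: is_tgt_src_args.
  by rewrite (subst_var _ Hr).
have PTcc := PT_dot PTc PTchi Htgt.
have PTcp := PT_dot PTchi PTphi HT1.
split => //.
- (* [psi ~ mu(src) . psi_i ~ mu(src) . (chi . phi) ~ (mu(src) . chi) . phi] *)
  apply: pe_trans (peq_contract HT Hm Hmu) _; rewrite E.
  apply: pe_trans (pe_sym (pe_assoc _ _)); last 2 first.
  + by do 2 eexists; exact: PT_dot PTcc PTphi HT1.
  + by do 2 eexists; exact: PT_dot PTc PTcp Htgt.
  apply: pe_cong_node => [[|[|j]] // _||].
  + by apply: pe_refl; do 2 eexists; exact: PTc.
  + by do 2 eexists; exact: PT_dot PTc (PT_multistep HT (multistep_child Hm Hmu Hi)) Htgt.
  + by do 2 eexists; exact: PT_dot PTc PTcp Htgt.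
- by exists T1, s2, T2.
- by apply: root_steps_cons => // j; exact: src_args_spec.
Qed.

Lemma outermost_split_exists (psi : tr) : fin_collapse (@rhs T) psi ->
  multistep psi -> convergent_ms psi -> exists chi phi, outermost_split psi chi phi.
Proof.
elim=> {psi} [psi Hstop|psi mu i Hmu Hr _ IH] Hm Hc.
  case: (multistep_root Hm) => [[f Hf]|[mu Hmu]].
    by exists (src psi), psi; exact: outermost_split_fun Hm Hc Hf.
  case: (pattern_root (rhs_pattern HT mu)) => [[g Hg]|[j [Hj _]]]; last first.
    by case: (Hstop mu j Hmu Hj).
  by do 2 eexists; exact: outermost_split_rule Hm Hc Hmu Hg.
have Hci : convergent_ms (child psi i).
  have [t [Hl Hrf]] := convergent_lim_red Hc; exists t; split => //.
  by apply: lim_red_sc_red; exact: lim_red_collapse Hmu Hr Hl Hrf.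
have Hi := rhs_collapse_arity HT Hr.
have [chi [phi Hsplit]] := IH (multistep_child Hm Hmu Hi) Hci.
by do 2 eexists; exact: outermost_split_collapse Hm Hmu Hr Hsplit.
Qed.

End Split.

Theorem mainTheorem6 (T : trs) (psi : tree (fs T) (rs T)) :
  left_linear_trs T ->
  multistep psi -> convergent_ms psi ->
  exists chi phi : tree (fs T) (rs T),
    [/\ peq psi (mkDot chi phi),
        is_pt chi,
        (exists n, fsw chi n /\
           forall i c, i < n -> component chi i c -> os_depth c 0),
        multistep phi /\ convergent_ms phi &
        mind_ge phi 1].
Proof.
move=> HT Hm Hc.
have [t [Hl Hrf]] := convergent_lim_red Hc.
have [chi [phi [Hpe [T1 [s2 [T2 [PTchi _ _]]]] Hsteps Hphi Hmind]]] :=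
  outermost_split_exists HT (lim_red_fin_collapse Hl Hrf) Hm Hc.
by exists chi, phi; split => //; exists (src psi), T1.
Qed.
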